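(* Let $\{w^k\}$ be generated by Algorithm 2 (running infinitely) and suppose $\varepsilon^k\to0$. Then each accumulation point $\bar w$ of $\{w^k\}$ that is feasible for (P) and AM-regular is an M-stationary point of (P), i.e., there is $\lambda\in\mathbb Y$ with $0\in\nabla f(\bar w)+G'(\bar w)^*\lambda+\mathcal N^{\lim}_D(\bar w)$ and $\lambda\in\mathcal N_C(G(\bar w))$.
   Context: Standing setting: $\mathbb W,\mathbb Y$ Euclidean spaces; (P) is $\min f(w)$ s.t. $G(w)\in C$, $w\in D$, with $f\colon\mathbb W\to\mathbb R$, $G\colon\mathbb W\to\mathbb Y$ continuously differentiable, $C\subset\mathbb Y$ nonempty closed convex, $D\subset\mathbb W$ nonempty closed. $P_C$ is the Euclidean projection onto $C$, $d_C(y)=\|y-P_C(y)\|$, $\mathcal N_C$ the convex normal cone ($\varnothing$ outside $C$); $\mathcal N^{\lim}_D(\bar w):=\limsup_{w\to\bar w}\operatorname{cone}(w-\Pi_D(w))$ for $\bar w\in D$ ($\Pi_D$ multivalued projection, outer set limit), $\varnothing$ for $\bar w\notin D$. A feasible $\bar w$ is AM-regular if $\limsup_{w\to\bar w,\,z\to0}\mathcal M(w,z)\subset\mathcal M(\bar w,0)$ with $\mathcal M(w,z):=G'(w)^*\mathcal N_C(G(w)-z)+\mathcal N^{\lim}_D(w)$. Augmented Lagrangian $\mathcal L_\rho(w,\lambda):=f(w)+\frac\rho2 d_C^2(G(w)+\lambda/\rho)$; $V_\rho(w,u):=\|G(w)-P_C(G(w)+u/\rho)\|$. Algorithm 2: data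 $\rho_0>0$, $\beta>1$, $\eta\in(0,1)$, $w^0\in D$, a nonempty bounded set $U\subset\mathbb Y$. For $k=0,1,\dots$: choose $u^k\in U$; compute $w^{k+1}$ and $\varepsilon^{k+1}\in\mathbb W$ with $\varepsilon^{k+1}\in\nabla_w\mathcal L_{\rho_k}(w^{k+1},u^k)+\mathcal N^{\lim}_D(w^{k+1})$; set $\lambda^{k+1}:=\rho_k[G(w^{k+1})+u^k/\rho_k-P_C(G(w^{k+1})+u^k/\rho_k)]$; if $k=0$ or $V_{\rho_k}(w^{k+1},u^k)\le\eta V_{\rho_{k-1}}(w^k,u^{k-1})$ set $\rho_{k+1}:=\rho_k$, else $\rho_{k+1}:=\beta\rho_k$. *)

(* Euclidean spaces W = 'rV[R]_n, Y = 'rV[R]_m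
   with the standard inner product (topology = the library's one on matrices,
   which coincides with the Euclidean topology). *)
From HB Require Import structures.
From mathcomp Require Import all_boot all_order all_algebra.
From mathcomp Require Import all_classical all_reals all_analysis.
Set Implicit Arguments. Unset Strict Implicit. Unset Printing Implicit Defensive.
Import Order.TTheory GRing.Theory Num.Theory.
Import numFieldNormedType.Exports.
Local Open Scope classical_set_scope.
Local Open Scope ring_scope.

Section Defs.
Variable R : realType.

Definition dotv {n : nat} (u v : 'rV[R]_n) : R := \sum_(i < n) u 0 i * v 0 i.
Definition enorm {n : nat} (u : 'rV[R]_n) : R := Num.sqrt (dotv u u).

Definition convex_set_E {n : nat} (C : set 'rV[R]_n) : Prop :=
  forall x y t, C x -> C y -> 0 <= t -> t <= 1 -> C (t *: x + (1 - t) *: y).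

Definition bounded_E {n : nat} (U : set 'rV[R]_n) : Prop :=
  exists M : R, forall y, U y -> enorm y <= M.

Definition Proj {n : nat} (D : set 'rV[R]_n) (w : 'rV[R]_n) : set 'rV[R]_n :=
  [set p | D p /\ forall d, D d -> enorm (w - p) <= enorm (w - d)].

(* P_C : single-valued projection (unique for nonempty closed convex C) *)
Definition projC {n : nat} (C : set 'rV[R]_n) (y : 'rV[R]_n) : 'rV[R]_n :=
  xget y (Proj C y).

Definition distC {n : nat} (C : set 'rV[R]_n) (y : 'rV[R]_n) : R :=
  enorm (y - projC C y).

(* convex normal cone; empty outside C *)
Definition NC {n : nat} (C : set 'rV[R]_n) (y : 'rV[R]_n) : set 'rV[R]_n :=
  [set v | C y /\ forall c, C c -> dotv v (c - y) <= 0].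

Definition proxcone {n : nat} (D : set 'rV[R]_n) (w : 'rV[R]_n) : set 'rV[R]_n :=
  [set v | exists t p, 0 <= t /\ Proj D w p /\ v = t *: (w - p)].

(* limiting normal cone: outer limit of proxcone as w -> wbar; empty outside D *)
Definition Nlim {n : nat} (D : set 'rV[R]_n) (wb : 'rV[R]_n) : set 'rV[R]_n :=
  [set v | D wb /\ exists (ws vs : nat -> 'rV[R]_n),
     ws @ \oo --> wb /\ vs @ \oo --> v /\ forall k, proxcone D (ws k) (vs k)].

Definition is_grad {n : nat} (F : 'rV[R]_n -> R^o) (w g : 'rV[R]_n) : Prop :=
  differentiable F w /\ forall h, 'd F w h = dotv g h.

Definition is_jac {n m : nat} (G : 'rV[R]_n -> 'rV[R]_m) (w : 'rV[R]_n)
  (J : 'M[R]_(n, m)) : Prop :=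
  differentiable G w /\ forall h, 'd G w h = h *m J.

(* adjoint G'(w)^* lambda = lambda *m J^T, since <h *m J, l> = <h, l *m J^T> *)
Definition adjJ {n m : nat} (J : 'M[R]_(n, m)) (l : 'rV[R]_m) : 'rV[R]_n :=
  l *m J^T.

Definition Mset {n m : nat} (G : 'rV[R]_n -> 'rV[R]_m) (JG : 'rV[R]_n -> 'M[R]_(n, m))
  (C : set 'rV[R]_m) (D : set 'rV[R]_n) (w : 'rV[R]_n) (z : 'rV[R]_m) : set 'rV[R]_n :=
  [set v | exists l d, NC C (G w - z) l /\ Nlim D w d /\ v = adjJ (JG w) l + d].

Definition AM_regular {n m : nat} (G : 'rV[R]_n -> 'rV[R]_m) (JG : 'rV[R]_n -> 'M[R]_(n, m))
  (C : set 'rV[R]_m) (D : set 'rV[R]_n) (wb : 'rV[R]_n) : Prop :=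
  forall v, (exists (ws : nat -> 'rV[R]_n) (zs : nat -> 'rV[R]_m) (vs : nat -> 'rV[R]_n),
      ws @ \oo --> wb /\ zs @ \oo --> (0 : 'rV[R]_m) /\ vs @ \oo --> v /\
      forall k, Mset G JG C D (ws k) (zs k) (vs k)) ->
    Mset G JG C D wb 0 v.

Definition AugL {n m : nat} (f : 'rV[R]_n -> R) (G : 'rV[R]_n -> 'rV[R]_m)
  (C : set 'rV[R]_m) (rho : R) (w : 'rV[R]_n) (l : 'rV[R]_m) : R :=
  f w + rho / 2 * (distC C (G w + rho^-1 *: l)) ^+ 2.

Definition Vrho {n m : nat} (G : 'rV[R]_n -> 'rV[R]_m) (C : set 'rV[R]_m)
  (rho : R) (w : 'rV[R]_n) (u : 'rV[R]_m) : R :=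
  enorm (G w - projC C (G w + rho^-1 *: u)).

Definition Algorithm2 {n m : nat} (f : 'rV[R]_n -> R) (G : 'rV[R]_n -> 'rV[R]_m)
  (C : set 'rV[R]_m) (D : set 'rV[R]_n)
  (rho0 beta eta : R) (U : set 'rV[R]_m)
  (rho : nat -> R) (u : nat -> 'rV[R]_m) (w eps : nat -> 'rV[R]_n)
  (lam : nat -> 'rV[R]_m) : Prop :=
  [/\ 0 < rho0 /\ 1 < beta /\ 0 < eta /\ eta < 1, D (w 0%N),
      (exists y, U y) /\ bounded_E U, rho 0%N = rho0 &
      forall k : nat,
      [/\ U (u k),
          (exists g, is_grad (fun x => AugL f G C (rho k) x (u k)) (w k.+1) g /\
                    Nlim D (w k.+1) (eps k.+1 - g)),
          lam k.+1 = rho k *: (G (w k.+1) + (rho k)^-1 *: u k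
                               - projC C (G (w k.+1) + (rho k)^-1 *: u k)) &
          rho k.+1 = (if (k == 0%N) ||
                         (Vrho G C (rho k) (w k.+1) (u k)
                            <= eta * Vrho G C (rho k.-1) (w k) (u k.-1))
                      then rho k else beta * rho k)]].

Definition accumulation_point {n : nat} (w : nat -> 'rV[R]_n) (wb : 'rV[R]_n) : Prop :=
  exists phi : nat -> nat, (forall k, (phi k < phi k.+1)%N) /\
    (fun k => w (phi k)) @ \oo --> wb.

End Defs.

From HB Require Import structures.
From mathcomp Require Import all_boot all_order all_algebra.
From mathcomp Require Import all_classical all_reals all_analysis.
From mathcomp Require Import ring lra.
Set Implicit Arguments. Unset Strict Implicit. Unset Printing Implicit Defensive.
Import Order.TTheory GRing.Theory Num.Theory.
Import numFieldNormedType.Exports.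
Local Open Scope classical_set_scope.
Local Open Scope ring_scope.

(* Let s be an index map with k <= s k and w (s k).+1 --> wb (it exists since
   wb is an accumulation point).  At every iterate, the optimality condition
   of the subproblem together with the formula for the gradient of the
   augmented Lagrangian, grad f + G'^* lambda, shows that
      eps^(k+1) - grad f(w^(k+1))  belongs to  M(w^(k+1), z^k),
   where z^k := G(w^(k+1)) - P_C(G(w^(k+1)) + u^k/rho_k), because lambda^(k+1)
   lies in N_C(P_C(...)).  The residual z^k tends to 0 along s: either the
   penalty is eventually constant, and then ||z^k|| = V_k decreases
   geometrically, or rho_k --> +oo, and then ||z^k|| <= O(1/rho_k) +
   O(||G(w^(k+1)) - G(wb)||) by feasibility of wb.  Since eps^k --> 0 and
   grad f is continuous, AM-regularity turns the limit -grad f(wb) into an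
   element of M(wb, 0), which is M-stationarity. *)

Section InnerProduct.
Variables (R : realType) (n : nat).
Implicit Types (a b c : 'rV[R]_n) (t : R).

Lemma dotvC a b : dotv a b = dotv b a.
Proof. by apply: eq_bigr => i _; rewrite mulrC. Qed.

Lemma dotvDl a b c : dotv (a + b) c = dotv a c + dotv b c.
Proof. by rewrite /dotv -big_split; apply: eq_bigr => i _; rewrite !mxE mulrDl. Qed.

Lemma dotvDr a b c : dotv c (a + b) = dotv c a + dotv c b.
Proof. by rewrite dotvC dotvDl !(dotvC c). Qed.

Lemma dotvZl t a b : dotv (t *: a) b = t * dotv a b.
Proof. by rewrite /dotv mulr_sumr; apply: eq_bigr => i _; rewrite !mxE mulrA. Qed.

Lemma dotvZr t a b : dotv a (t *: b) = t * dotv a b.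
Proof. by rewrite dotvC dotvZl dotvC. Qed.

Lemma dotvNl a b : dotv (- a) b = - dotv a b.
Proof. by rewrite -scaleN1r dotvZl mulN1r. Qed.

Lemma dotvNr a b : dotv a (- b) = - dotv a b.
Proof. by rewrite -scaleN1r dotvZr mulN1r. Qed.

Lemma dotvBl a b c : dotv (a - b) c = dotv a c - dotv b c.
Proof. by rewrite dotvDl dotvNl. Qed.

Lemma dotvBr a b c : dotv c (a - b) = dotv c a - dotv c b.
Proof. by rewrite dotvDr dotvNr. Qed.

Lemma dotv0l a : dotv 0 a = 0.
Proof. by rewrite /dotv big1 // => i _; rewrite mxE mul0r. Qed.

Lemma dotv_ge0 a : 0 <= dotv a a.
Proof. by apply: sumr_ge0 => i _; rewrite -expr2 sqr_ge0. Qed.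

Lemma dotv_eq0 a : dotv a a = 0 -> a = 0.
Proof.
move/psumr_eq0P => a0; apply/matrixP => i j; rewrite mxE (ord1 i).
have /eqP : a 0 j * a 0 j = 0 by apply: a0 => // k _; rewrite -expr2 sqr_ge0.
by rewrite -expr2 sqrf_eq0 => /eqP.
Qed.

Lemma dotv_inj a b : (forall h, dotv a h = dotv b h) -> a = b.
Proof. by move=> ab; apply/eqP; rewrite -subr_eq0; apply/eqP/dotv_eq0; rewrite dotvBl ab subrr. Qed.

Lemma enorm_ge0 a : 0 <= enorm a.
Proof. exact: sqrtr_ge0. Qed.

Lemma enorm_sq a : enorm a ^+ 2 = dotv a a.
Proof. by rewrite sqr_sqrtr // dotv_ge0. Qed.

Lemma enorm_le a b : (enorm a <= enorm b) = (dotv a a <= dotv b b).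
Proof. by rewrite ler_sqrt // dotv_ge0. Qed.

Lemma mxnorm_le_enorm a : `|a| <= enorm a.
Proof.
rewrite (_ : `|a| = mx_norm a) // mx_normrE; apply: bigmax_le; first exact: enorm_ge0.
move=> [i j] _ /=; rewrite (ord1 i).
rewrite -(ler_pXn2r (_ : 0 < 2)%N) ?nnegrE ?enorm_ge0 // enorm_sq real_normK ?num_real //.
by rewrite /dotv (bigD1 j) //= -expr2 lerDl; apply: sumr_ge0 => k _; rewrite -expr2 sqr_ge0.
Qed.

Lemma enorm_le_mxnorm a : enorm a <= n%:R * `|a|.
Proof.
rewrite -(ler_pXn2r (_ : 0 < 2)%N) ?nnegrE ?enorm_ge0 ?mulr_ge0 // enorm_sq.
apply: (@le_trans _ _ (\sum_(i < n) `|a| ^+ 2)).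
  apply: ler_sum => i _; rewrite -expr2 -real_normK ?num_real // lerXn2r ?nnegrE //.
  by rewrite (_ : `|a| = mx_norm a) // mx_normrE; apply/bigmax_geP; right; exists (ord0, i).
rewrite sumr_const card_ord exprMn -[X in X <= _]mulr_natl ler_wpM2r ?sqr_ge0 //.
by rewrite -natrX ler_nat; case: n {a} => // k; rewrite expnS expn1 leq_pmulr.
Qed.

Lemma cvg_dotv T (F : set_system T) (FF : Filter F) (a b : T -> 'rV[R]_n) a0 b0 :
  a @ F --> a0 -> b @ F --> b0 -> (fun x => dotv (a x) (b x)) @ F --> dotv a0 b0.
Proof.
move=> ca cb; rewrite /dotv; elim: (index_enum _) => [|i s IH].
  by under eq_fun do rewrite big_nil; rewrite big_nil; exact: cvg_cst.
under eq_fun do rewrite big_cons; rewrite big_cons; apply: cvgD => //.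
have coord (c : T -> 'rV[R]_n) c0 : c @ F --> c0 -> (fun x => c x 0 i) @ F --> c0 0 i.
  exact: (continuous_cvg _ (@coord_continuous R 1 n 0 i c0)).
by apply: cvgM; apply: coord.
Qed.

End InnerProduct.

Lemma dotv_adj (R : realType) n m (J : 'M[R]_(n, m)) (l : 'rV[R]_m) (h : 'rV[R]_n) :
  dotv (adjJ J l) h = dotv l (h *m J).
Proof.
rewrite /dotv /adjJ; under eq_bigr do rewrite mxE big_distrl /=.
rewrite exchange_big; apply: eq_bigr => k _ /=; rewrite mxE big_distrr /=.
by apply: eq_bigr => i _; rewrite !mxE; ring.
Qed.

Section Projection.
Variables (R : realType) (m : nat) (C : set 'rV[R]_m).
Hypotheses (Ccl : closed C) (Cne : exists c, C c).

(* Existence of a nearest point: minimize the continuous squared distance on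
   the compact set of points of C at least as close as a given c0 in C. *)
Lemma Proj_exists y : exists p, Proj C y p.
Proof.
have [c0 Cc0] := Cne.
pose g x := dotv (y - x) (y - x).
have gc : continuous g.
  move=> x; have hc : (fun z => y - z) @ x --> y - x.
    exact: (@cvgB R _ _ (nbhs x) _ (cst y) id y x (cvg_cst y) cvg_id).
  exact: (@cvg_dotv R m _ (nbhs x) _ _ _ _ _ hc hc).
pose A := C `&` [set x | g x <= g c0].
have Acl : closed A.
  apply: (closedI Ccl); apply: (@preimage_closed _ _ g [set r | r <= g c0]).
    by move=> z _; apply: gc.
  exact: closed_le.
have Ab : bounded_set A.
  exists (`|y| + Num.sqrt (g c0)); split; first exact: num_real.
  move=> M BM x [_ Ax]; apply/ltW/le_lt_trans/BM.
  have -> : x = y + (x - y) by rewrite addrC subrK.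
  rewrite (le_trans (ler_normD _ _)) // lerD2l distrC.
  by rewrite (le_trans (mxnorm_le_enorm _)) // ler_sqrt // dotv_ge0.
have [c /[!inE] -[Cc cle] cmin] := compact_EVT_min (ex_intro _ c0 (conj Cc0 (lexx _)) : A !=set0)
   (bounded_closed_compact Ab Acl) (continuous_subspaceT gc).
exists c; split => // d Cd; rewrite enorm_le -/(g c) -/(g d).
have [dc0|/ltW c0d] := leP (g d) (g c0); first by apply: cmin; rewrite inE.
exact: le_trans cle c0d.
Qed.

Lemma projC_spec y : Proj C y (projC C y).
Proof. exact: xgetPex (Proj_exists y). Qed.

Lemma projC_in y : C (projC C y).
Proof. by case: (projC_spec y). Qed.

(* Variational inequality: if p is a nearest point of y in the convex set C,
   then s := <y - p, c - p> <= 0 for all c in C.  Otherwise, moving from p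
   towards c by the step t = s / (B + s), B := |c - p|^2, would strictly
   decrease the distance to y. *)
Lemma Proj_vi y p c : convex_set_E C -> Proj C y p -> C c -> dotv (y - p) (c - p) <= 0.
Proof.
move=> Ccv [Cp pmin] Cc.
set s := dotv (y - p) (c - p); set B := dotv (c - p) (c - p).
have B0 : 0 <= B := dotv_ge0 _.
have no_descent t : 0 < t -> t <= 1 -> 0 <= - (2 * t * s) + t ^+ 2 * B.
  move=> t0 t1; have := pmin _ (Ccv c p t Cc Cp (ltW t0) t1); rewrite enorm_le.
  have -> : y - (t *: c + (1 - t) *: p) = (y - p) - t *: (c - p).
    by apply/matrixP => i j; rewrite !mxE; ring.
  have expand (a b : 'rV[R]_m) :
      dotv (a - t *: b) (a - t *: b) = dotv a a - 2 * t * dotv a b + t ^+ 2 * dotv b b.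
    by rewrite !dotvBl !dotvBr !dotvZl !dotvZr (dotvC b a); ring.
  rewrite expand -/s -/B; lra.
rewrite leNgt; apply/negP => s0.
have Bs0 : 0 < B + s by lra.
pose t := s / (B + s).
have t1 : t <= 1 by rewrite ler_pdivrMr // mul1r; lra.
have tE : t * (B + s) = s by rewrite /t mulfVK // gt_eqF.
have t0 : 0 < t by rewrite divr_gt0.
have := no_descent t t0 t1.
nra.
Qed.

Lemma projC_normal y r : convex_set_E C -> 0 <= r ->
  NC C (projC C y) (r *: (y - projC C y)).
Proof.
move=> Ccv r0; split; first exact: projC_in.
by move=> c Cc; rewrite dotvZl mulr_ge0_le0 // (Proj_vi Ccv (projC_spec y) Cc).
Qed.

Lemma distC_sq_le y v :
  distC C (y + v) ^+ 2 <= distC C y ^+ 2 + 2 * dotv (y - projC C y) v + dotv v v.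
Proof.
have [_ pmin] := projC_spec (y + v).
set p := projC C y.
have nearest : distC C (y + v) ^+ 2 <= dotv (y + v - p) (y + v - p).
  by rewrite -enorm_sq lerXn2r ?nnegrE ?enorm_ge0 //; apply/pmin/projC_in.
apply: (le_trans nearest); rewrite /distC enorm_sq -/p.
have -> : y + v - p = (y - p) + v by rewrite addrAC.
by rewrite !dotvDl !dotvDr (dotvC v y) (dotvC v (- p)); lra.
Qed.

Lemma projC_shift_bound z c (r M : R) (u : 'rV[R]_m) : C c -> 0 <= r -> enorm u <= M ->
  `|z - projC C (z + r *: u)| <= (1 + m%:R) * (r * M) + m%:R * `|z - c|.
Proof.
move=> Cc r0 uM; set y := z + r *: u; set p := projC C y.
have ru : `|r *: u| <= r * M.
  by rewrite normrZ ger0_norm // ler_wpM2l // (le_trans (mxnorm_le_enorm u)).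
have yp : `|y - p| <= m%:R * (`|z - c| + r * M).
  have [_ pmin] := projC_spec y.
  rewrite (le_trans (mxnorm_le_enorm _)) // (le_trans (pmin _ Cc)) //.
  rewrite (le_trans (enorm_le_mxnorm _)) // ler_wpM2l //.
  by rewrite /y addrAC (le_trans (ler_normD _ _)) // lerD2l.
have -> : z - p = - (r *: u) + (y - p) by apply/matrixP => i j; rewrite !mxE; ring.
rewrite mulrDr in yp; rewrite (le_trans (ler_normD _ _)) // normrN; lra.
Qed.

End Projection.

Lemma diff_quotient_cvg (R : realType) n (W : normedModType R) (F : 'rV[R]_n -> W)
    (x h : 'rV[R]_n) :
  differentiable F x -> (fun t : R => t^-1 *: (F (t *: h + x) - F x)) @ 0^'+ --> 'd F x h.
Proof.
move=> dF; rewrite -deriveE //; apply: cvg_trans (diff_derivable dF).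
by apply: cvg_fmap2; apply: within_subset => t /= t0; rewrite gt_eqF.
Qed.

(* Only the upper bound on directional
   derivatives is proved directly, from the first-order bound distC_sq_le on
   the squared distance; applying it to h and -h gives equality. *)
Section AugmentedLagrangianGradient.
Variables (R : realType) (n m : nat) (f : 'rV[R]_n -> R) (G : 'rV[R]_n -> 'rV[R]_m).
Variables (C : set 'rV[R]_m) (rho : R) (u : 'rV[R]_m) (x gf g : 'rV[R]_n) (J : 'M[R]_(n, m)).
Hypotheses (Ccl : closed C) (Cne : exists c, C c) (rho_gt0 : 0 < rho).
Hypotheses (f_grad : is_grad f x gf) (G_jac : is_jac G x J).
Hypothesis (L_grad : is_grad (fun z => AugL f G C rho z u) x g).

Let y := G x + rho^-1 *: u.
Let p := projC C y.

Let Ginc h t := G (t *: h + x) - G x.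

Let quotient_bound h t := t^-1 *: (f (t *: h + x) - f x)
  + rho / 2 * (2 * dotv (y - p) (t^-1 *: Ginc h t) + dotv (t^-1 *: Ginc h t) (Ginc h t)).

Lemma AugL_quotient_le h t : 0 < t ->
  t^-1 *: (AugL f G C rho (t *: h + x) u - AugL f G C rho x u) <= quotient_bound h t.
Proof.
move=> t0; rewrite /AugL /quotient_bound.
have -> : G (t *: h + x) + rho^-1 *: u = y + Ginc h t.
  by apply/matrixP => i j; rewrite /y /Ginc !mxE; ring.
have := distC_sq_le Ccl Cne y (Ginc h t); rewrite -/y -/p dotvZl dotvZr => dist_le.
have w_gt0 : 0 < t^-1 * (rho / 2) by rewrite mulr_gt0 ?invr_gt0 ?divr_gt0.
have key (ti a b d1 d0 s q : R) : 0 < ti * (rho / 2) -> d1 <= d0 + 2 * s + q ->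
    ti * (a + rho / 2 * d1 - (b + rho / 2 * d0)) <= ti * (a - b) + rho / 2 * (2 * (ti * s) + ti * q).
  move=> wt0 dl; rewrite -subr_ge0.
  have -> : ti * (a - b) + rho / 2 * (2 * (ti * s) + ti * q)
      - ti * (a + rho / 2 * d1 - (b + rho / 2 * d0)) = ti * (rho / 2) * (d0 + 2 * s + q - d1).
    by ring.
  by rewrite mulr_ge0 ?subr_ge0 // ltW.
exact: key w_gt0 dist_le.
Qed.

Lemma quotient_bound_cvg h :
  quotient_bound h @ 0^'+ --> dotv gf h + rho * dotv (y - p) (h *m J).
Proof.
have [df dfE] := f_grad; have [dG dGE] := G_jac.
have cf := diff_quotient_cvg (h := h) df; rewrite dfE in cf.
have cG := diff_quotient_cvg (h := h) dG; rewrite dGE in cG.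
have cGinc : Ginc h @ 0^'+ --> (0 : 'rV[R]_m).
  have ct : (fun t : R => t) @ 0^'+ --> (0 : R) by apply: cvg_at_right_filter; exact: cvg_id.
  rewrite -(scale0r (h *m J)); apply: cvg_trans (cvgZ ct cG).
  apply: near_eq_cvg; near=> t.
  have t0 : 0 < t by near: t; exact: nbhs_right_gt.
  by rewrite scalerA mulfV ?gt_eqF // scale1r.
have -> : dotv gf h + rho * dotv (y - p) (h *m J) =
    dotv gf h + rho / 2 * (2 * dotv (y - p) (h *m J) + dotv (h *m J) 0).
  by rewrite (dotvC (h *m J) 0) dotv0l addr0; field.
apply: cvgD => //; apply: cvgM; first exact: cvg_cst.
apply: cvgD; last exact: cvg_dotv.
by apply: cvgM; [exact: cvg_cst | apply: cvg_dotv => //; exact: cvg_cst].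
Unshelve. all: by end_near.
Qed.

Lemma AugL_grad_le h : dotv g h <= dotv gf h + rho * dotv (y - p) (h *m J).
Proof.
have [dL dLE] := L_grad.
have cL := diff_quotient_cvg (h := h) dL; rewrite dLE in cL.
have := ler_cvg_to cL (quotient_bound_cvg (h := h)); apply; near=> t.
apply: AugL_quotient_le; near: t; exact: nbhs_right_gt.
Unshelve. all: by end_near.
Qed.

Lemma AugL_grad : g = gf + adjJ J (rho *: (y - p)).
Proof.
apply: dotv_inj => h; rewrite dotvDl dotv_adj dotvZl.
apply/eqP; rewrite eq_le AugL_grad_le /=.
by have := AugL_grad_le (- h); rewrite mulNmx !dotvNr; lra.
Qed.

End AugmentedLagrangianGradient.

Lemma cvg_reindex (T : topologicalType) (a : nat -> T) (s : nat -> nat) (l : T) :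
  (forall k, (k <= s k)%N) -> a @ \oo --> l -> (fun k => a (s k)) @ \oo --> l.
Proof.
move=> sk al; apply: cvg_comp al => P [N _ NP]; exists N => // k /= Nk.
exact/NP/(leq_trans Nk).
Qed.

Lemma eventually_contracting_cvg0 (R : realType) (a : R ^nat) (eta : R) :
  0 <= eta -> eta < 1 -> (forall k, 0 <= a k) ->
  (\forall k \near \oo, a k.+1 <= eta * a k) -> a @ \oo --> 0.
Proof.
move=> eta0 eta1 a0 [N _ contr].
have geom i : a (i + N)%N <= eta ^+ i * a N.
  elim: i => [|i IH]; first by rewrite add0n expr0 mul1r.
  rewrite addSn (le_trans (contr _ (leq_addl _ _))) // exprS -mulrA ler_wpM2l //.
rewrite -(cvg_shiftn N); apply: (@squeeze_cvgr _ _ _ _ (cst 0) (fun i => eta ^+ i * a N)).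
- by near=> i; rewrite /= a0 geom.
- exact: cvg_cst.
- rewrite -(mul0r (a N)); apply: cvgMr_tmp; apply: cvg_expr.
  by rewrite ger0_norm.
Unshelve. all: by end_near.
Qed.

(* A positive sequence in which each step either stays or multiplies by a
   fixed beta > 1 is nondecreasing; if it converges, its increments tend to
   0 and eventually fall below (beta - 1) rho_0, so the sequence is
   eventually constant; otherwise it diverges to +oo. *)
Lemma penalty_dichotomy (R : realType) (rho : R ^nat) (beta : R) :
  1 < beta -> (forall k, 0 < rho k) ->
  (forall k, rho k.+1 = rho k \/ rho k.+1 = beta * rho k) ->
  (\forall k \near \oo, rho k.+1 = rho k) \/ rho @ \oo --> +oo.
Proof.
move=> beta1 rho_gt0 step.
have rho_nd : nondecreasing_seq rho.
  by apply/nondecreasing_seqP => k; case: (step k) => ->; rewrite ?lexx // ler_peMl // ltW.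
have [cv|dv] := pselect (cvgn rho); last by right; exact: nondecreasing_dvgn_lt.
left.
have incr0 : (fun k => rho k.+1 - rho k) @ \oo --> 0.
  rewrite -(subrr (limn rho)); apply: cvgB => //.
  by have := cv; rewrite -cvg_shiftS; apply.
have gap : 0 < (beta - 1) * rho 0%N by rewrite mulr_gt0 ?subr_gt0.
have : \forall k \near \oo, `|rho k.+1 - rho k| < (beta - 1) * rho 0%N.
  by move/cvgr0Pnorm_lt: incr0; apply.
apply: filterS => k small.
case: (step k) => // rhoS; exfalso; move: small; apply/negP; rewrite -leNgt.
rewrite rhoS; have -> : beta * rho k - rho k = (beta - 1) * rho k by ring.
have beta1_ge0 : 0 <= beta - 1 by rewrite subr_ge0 ltW.
rewrite ger0_norm ?mulr_ge0 ?(ltW (rho_gt0 k)) // ler_wpM2l //.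
exact: rho_nd (leq0n k).
Qed.

Section Algorithm2Iterates.
Variables (R : realType) (n m : nat) (f : 'rV[R]_n -> R) (gradf : 'rV[R]_n -> 'rV[R]_n).
Variables (G : 'rV[R]_n -> 'rV[R]_m) (JG : 'rV[R]_n -> 'M[R]_(n, m)).
Variables (C : set 'rV[R]_m) (D : set 'rV[R]_n) (rho0 beta eta : R) (U : set 'rV[R]_m).
Variables (rho : nat -> R) (u : nat -> 'rV[R]_m) (w eps : nat -> 'rV[R]_n) (lam : nat -> 'rV[R]_m).
Hypothesis alg : Algorithm2 f G C D rho0 beta eta U rho u w eps lam.
Hypotheses (Ccl : closed C) (Cne : exists c, C c).

(* The constraint residual z^k = G(w^(k+1)) - P_C(G(w^(k+1)) + u^k / rho_k);
   its Euclidean norm is V_(rho_k)(w^(k+1), u^k). *)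
Definition resid k : 'rV[R]_m := G (w k.+1) - projC C (G (w k.+1) + (rho k)^-1 *: u k).

Lemma rho_gt0 k : 0 < rho k.
Proof.
have [[rho0_gt0 [beta1 _]] _ _ rho_0 step] := alg.
elim: k => [|k IH]; first by rewrite rho_0.
by have [_ _ _ ->] := step k; case: ifP => _ //; rewrite mulr_gt0 // (lt_trans ltr01).
Qed.

Lemma rho_step k : rho k.+1 = rho k \/ rho k.+1 = beta * rho k.
Proof. by have [_ _ _ _ step] := alg; have [_ _ _ ->] := step k; case: ifP; [left|right]. Qed.

(* Once the penalty parameter stays fixed, the update rule can only have
   kept it because V decreased by the factor eta; hence the residual tends
   to 0. *)
Lemma resid_cvg0_fixed_penalty :
  (\forall k \near \oo, rho k.+1 = rho k) -> (fun k => enorm (resid k)) @ \oo --> 0.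
Proof.
have [[_ [beta1 [eta0 eta1]]] _ _ _ step] := alg.
move=> [N _ fixed]; apply: eventually_contracting_cvg0 (ltW eta0) eta1 (fun k => enorm_ge0 _) _.
exists N => // k /= Nk; have [_ _ _] := step k.+1.
case: ifP => [/orP [//|contr] _ | _ rho_incr]; first exact: contr.
have := fixed k.+1 (leqW Nk); rewrite rho_incr => rho_same.
have /eqP : (beta - 1) * rho k.+1 = 0 by rewrite mulrBl mul1r rho_same subrr.
by rewrite mulf_eq0 subr_eq0 (gt_eqF beta1) (gt_eqF (rho_gt0 _)).
Qed.

(* If the penalty parameter diverges, the residual along a subsequence of
   iterates converging to a feasible point tends to 0: the shift u^k / rho_k
   vanishes since U is bounded, and G(w^(k+1)) approaches G(wb) in C. *)
Lemma resid_cvg0_diverging_penalty (s : nat -> nat) (wb : 'rV[R]_n) :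
  rho @ \oo --> +oo -> (forall k, (k <= s k)%N) -> continuous G ->
  (fun k => w (s k).+1) @ \oo --> wb -> C (G wb) ->
  (fun k => resid (s k)) @ \oo --> (0 : 'rV[R]_m).
Proof.
have [_ _ [_ [M uM]] _ step] := alg.
move=> rho_oo sk Gc wsb CGb; apply/norm_cvg0P.
have rinv : (fun k => (rho (s k))^-1) @ \oo --> (0 : R).
  apply: (cvg_reindex (a := fun k => (rho k)^-1)) sk _.
  have rho_pos : \forall k \near \oo, 0 < rho k by near=> k; exact: rho_gt0.
  exact/(gtr0_cvgV0 rho_pos).
have Gdist : (fun k => `|G (w (s k).+1) - G wb|) @ \oo --> (0 : R).
  by apply/norm_cvg0P; rewrite -(subrr (G wb)); apply: cvgB (cvg_comp _ _ wsb (Gc wb)) (cvg_cst _).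
apply: (squeeze_cvgr (f := cst 0)
  (h := fun k => (1 + m%:R) * ((rho (s k))^-1 * M) + m%:R * `|G (w (s k).+1) - G wb|)).
- near=> k; rewrite normr_ge0 /=; have [uU _ _ _] := step (s k).
  by apply: projC_shift_bound => //; [rewrite invr_ge0 ltW ?rho_gt0 | exact: uM].
- exact: cvg_cst.
- have -> : (0 : R) = (1 + m%:R) * (0 * M) + m%:R * 0 by rewrite mul0r !mulr0 addr0.
  by apply: cvgD; apply: cvgMl_tmp => //; exact: cvgMr_tmp.
Unshelve. all: by end_near.
Qed.

Lemma resid_cvg0 (s : nat -> nat) (wb : 'rV[R]_n) :
  (forall k, (k <= s k)%N) -> continuous G ->
  (fun k => w (s k).+1) @ \oo --> wb -> C (G wb) ->
  (fun k => resid (s k)) @ \oo --> (0 : 'rV[R]_m).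
Proof.
have [[_ [beta1 _]] _ _ _ _] := alg.
have [fixed|rho_oo] := penalty_dichotomy beta1 rho_gt0 rho_step; last first.
  exact: resid_cvg0_diverging_penalty.
move=> sk _ _ _; apply/norm_cvg0P.
apply: (squeeze_cvgr (f := cst 0) (h := fun k => enorm (resid (s k)))).
- by near=> k; rewrite normr_ge0 mxnorm_le_enorm.
- exact: cvg_cst.
- exact: cvg_reindex sk (resid_cvg0_fixed_penalty fixed).
Unshelve. all: by end_near.
Qed.

(* Approximate M-stationarity of each iterate: the optimality condition of
   the k-th subproblem places eps^(k+1) - grad f(w^(k+1)) in
   M(w^(k+1), z^k), with multiplier lambda^(k+1) normal to C at
   G(w^(k+1)) - z^k = P_C(G(w^(k+1)) + u^k / rho_k). *)
Lemma iterate_in_M k : (forall x, is_grad f x (gradf x)) -> (forall x, is_jac G x (JG x)) ->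
  convex_set_E C -> Mset G JG C D (w k.+1) (resid k) (eps k.+1 - gradf (w k.+1)).
Proof.
move=> f_grad G_jac Ccv; have [_ _ _ _ step] := alg.
have [_ [g [L_grad eps_normal]] lamE _] := step k.
have gE := AugL_grad Ccl Cne (rho_gt0 k) (f_grad _) (G_jac _) L_grad.
exists (lam k.+1), (eps k.+1 - g); split; [|split] => //.
- have -> : G (w k.+1) - resid k = projC C (G (w k.+1) + (rho k)^-1 *: u k).
    by apply/matrixP => i j; rewrite !mxE; ring.
  by rewrite lamE; apply: projC_normal => //; exact/ltW/rho_gt0.
- rewrite gE -lamE; move: (adjJ _ _) => a.
  by apply/matrixP => i j; rewrite !mxE; ring.
Qed.

End Algorithm2Iterates.

(* An accumulation point of w is the limit of w along (s k).+1 for some index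
   map s with k <= s k; the shift by one matches the indexing of Algorithm 2,
   which produces w^(k+1) at iteration k. *)
Lemma accumulation_point_shift (R : realType) n (w : nat -> 'rV[R]_n) (wb : 'rV[R]_n) :
  accumulation_point w wb ->
  exists s : nat -> nat, (forall k, (k <= s k)%N) /\ (fun k => w (s k).+1) @ \oo --> wb.
Proof.
move=> [phi [phi_incr phi_cvg]].
have phi_ge k : (k <= phi k)%N by elim: k => // k IH; exact: leq_ltn_trans IH (phi_incr k).
have phiS k : ((phi k.+1).-1).+1 = phi k.+1 by rewrite prednK // (leq_ltn_trans _ (phi_incr k)).
exists (fun k => (phi k.+1).-1); split => [k|]; first by rewrite -ltnS phiS phi_ge.
by under eq_fun do rewrite phiS; have := phi_cvg; rewrite -cvg_shiftS; apply.
Qed.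

Unset Implicit Arguments. Set Strict Implicit. Set Printing Implicit Defensive.

Theorem mainTheorem10 (R : realType) (n m : nat)
  (f : 'rV[R]_n -> R) (gradf : 'rV[R]_n -> 'rV[R]_n)
  (G : 'rV[R]_n -> 'rV[R]_m) (JG : 'rV[R]_n -> 'M[R]_(n, m))
  (C : set 'rV[R]_m) (D : set 'rV[R]_n)
  (Hf : forall w, is_grad f w (gradf w)) (Hgradf : continuous gradf)
  (HG : forall w, is_jac G w (JG w)) (HJG : continuous JG)
  (HCne : exists y, C y) (HCcl : closed C) (HCcv : convex_set_E C)
  (HDne : exists w, D w) (HDcl : closed D)
  (rho0 beta eta : R) (U : set 'rV[R]_m)
  (rho : nat -> R) (u : nat -> 'rV[R]_m) (w eps : nat -> 'rV[R]_n)
  (lam : nat -> 'rV[R]_m)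
  (Halg : Algorithm2 f G C D rho0 beta eta U rho u w eps lam)
  (Heps : eps @ \oo --> (0 : 'rV[R]_n))
  (wb : 'rV[R]_n) (Hacc : accumulation_point w wb)
  (Hfeas : C (G wb) /\ D wb)
  (Hreg : AM_regular G JG C D wb) :
  exists l : 'rV[R]_m,
    (exists d, Nlim D wb d /\ 0 = gradf wb + adjJ (JG wb) l + d) /\
    NC C (G wb) l.
Proof.
have [s [sk ws_cvg]] := accumulation_point_shift Hacc.
have G_cont : continuous G := fun x => differentiable_continuous (HG x).1.
have vs_cvg : (fun k => eps (s k).+1 - gradf (w (s k).+1)) @ \oo --> - gradf wb.
  rewrite -[X in _ --> X]sub0r; apply: cvgB.
  - exact: cvg_reindex (fun k => leqW (sk k)) Heps.
  - exact: cvg_comp ws_cvg (Hgradf wb).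
have [l [d [l_normal [d_normal stationary]]]] : Mset G JG C D wb 0 (- gradf wb).
  apply: Hreg; exists (fun k => w (s k).+1), (fun k => resid G C rho u w (s k)).
  exists (fun k => eps (s k).+1 - gradf (w (s k).+1)); split; first exact: ws_cvg.
  split; first by have := resid_cvg0 Halg HCcl HCne sk G_cont ws_cvg (proj1 Hfeas); apply.
  by split => // k; exact: iterate_in_M Halg HCcl HCne (s k) Hf HG HCcv.
exists l; split; last by rewrite subr0 in l_normal.
by exists d; split => //; rewrite -addrA -stationary subrr.
Qed.
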